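(* Let $(A,\mu,\alpha,\beta)$ be a BiHom-commutative algebra (with $\mu(x\otimes y)=x\cdot y$). Let $\gamma,\lambda,\xi:A\to A$ be linear maps such that $\gamma(x\cdot y)=\gamma(x)\cdot\gamma(y)$, $\lambda(x\cdot y)=\lambda(x)\cdot\lambda(y)$ and $\xi(x\cdot y)=\xi(x)\cdot\xi(y)$ for all $x,y\in A$. Let $D:A\to A$ be a linear map, assume that any two of the maps $\alpha,\beta,\gamma,\lambda,\xi,D$ commute, and that $D(a\cdot b)=\gamma(a)\cdot D(b)+D(a)\cdot\gamma(b)$ for all $a,b\in A$. Define a new multiplication on $A$ by $a\ast b=\lambda(a)\cdot\xi D(b)$. Then $(A,\ast,\lambda\alpha,\xi\beta\gamma)$ is a BiHom-Novikov algebra.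
   Context: Work over a field. A BiHom-associative algebra is a 4-tuple $(A,\mu,\alpha,\beta)$ with $\alpha,\beta:A\to A$ linear, $\alpha\beta=\beta\alpha$, $\alpha,\beta$ multiplicative for $\mu$ (written $x\cdot y$), and $\alpha(x)\cdot(y\cdot z)=(x\cdot y)\cdot\beta(z)$ for all $x,y,z$. It is BiHom-commutative if moreover $\beta(a)\cdot\alpha(b)=\beta(b)\cdot\alpha(a)$ for all $a,b$. A BiHom-Novikov algebra is a 4-tuple $(A,\mu,\alpha,\beta)$ with commuting linear $\alpha,\beta$ such that for all $x,y,z$: $\alpha(x\cdot y)=\alpha(x)\cdot\alpha(y)$, $\beta(x\cdot y)=\beta(x)\cdot\beta(y)$, $(\beta(x)\cdot\alpha(y))\cdot\beta(z)-\alpha\beta(x)\cdot(\alpha(y)\cdot z)=(\beta(y)\cdot\alpha(x))\cdot\beta(z)-\alpha\beta(y)\cdot(\alpha(x)\cdot z)$, and $(x\cdot\beta(y))\cdot\alpha\beta(z)=(x\cdot\beta(z))\cdot\alpha\beta(y)$. *)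

From HB Require Import structures.
From mathcomp Require Import all_boot all_algebra.
Set Implicit Arguments. Unset Strict Implicit. Unset Printing Implicit Defensive.
Import GRing.Theory.
Local Open Scope ring_scope.

Section BiHom.
Variables (K : fieldType) (A : lmodType K).

Definition lin_map (f : A -> A) : Prop :=
  forall (c : K) (x y : A), f (c *: x + y) = c *: f x + f y.

Definition bilinear_mul (mu : A -> A -> A) : Prop :=
  (forall (c : K) (x y z : A), mu (c *: x + y) z = c *: mu x z + mu y z) /\
  (forall (c : K) (x y z : A), mu x (c *: y + z) = c *: mu x y + mu x z).

Definition multiplicative (mu : A -> A -> A) (f : A -> A) : Prop :=
  forall x y, f (mu x y) = mu (f x) (f y).

Definition commute_maps (f g : A -> A) : Prop := forall x, f (g x) = g (f x).

Definition BiHom_associative (mu : A -> A -> A) (alpha beta : A -> A) : Prop :=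
  bilinear_mul mu /\ lin_map alpha /\ lin_map beta /\
      commute_maps alpha beta /\
      multiplicative mu alpha /\ multiplicative mu beta /\
      forall x y z, mu (alpha x) (mu y z) = mu (mu x y) (beta z).

Definition BiHom_commutative (mu : A -> A -> A) (alpha beta : A -> A) : Prop :=
  BiHom_associative mu alpha beta /\
  forall a b, mu (beta a) (alpha b) = mu (beta b) (alpha a).

Definition BiHom_Novikov (mu : A -> A -> A) (alpha beta : A -> A) : Prop :=
  bilinear_mul mu /\ lin_map alpha /\ lin_map beta /\
      commute_maps alpha beta /\
      multiplicative mu alpha /\ multiplicative mu beta /\
      (forall x y z,
         mu (mu (beta x) (alpha y)) (beta z) - mu (alpha (beta x)) (mu (alpha y) z)
         = mu (mu (beta y) (alpha x)) (beta z) - mu (alpha (beta y)) (mu (alpha x) z)) /\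
      (forall x y z,
         mu (mu x (beta y)) (alpha (beta z)) = mu (mu x (beta z)) (alpha (beta y))).

(* any two maps of the list commute (nth with default id, which commutes with everything) *)
Definition pairwise_commute (l : seq (A -> A)) : Prop :=
  forall i j : nat, commute_maps (nth id l i) (nth id l j).

End BiHom.

(* Since all the maps commute, linearity, multiplicativity and commutation of
   alpha' = lambda alpha and beta' = xi beta gamma pass to a * b = lambda(a) xi D(b).
   In a BiHom-commutative algebra (p beta(u)) beta alpha(v) is symmetric in u, v,
   which gives the second Novikov identity.  For the first one, the Leibniz rule
   splits alpha' beta'(x) * (alpha'(y) * z) into two terms: one equals
   (beta'(x) * alpha'(y)) * beta'(z) by BiHom-associativity and cancels, and the
   other, alpha beta(p) (alpha(q) r), is symmetric in p, q by BiHom-commutativity. *)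
From mathcomp Require Import all_boot all_algebra.
Import GRing.Theory.
Set Implicit Arguments. Unset Strict Implicit.
Local Open Scope ring_scope.

Section LinearMaps.
Variables (K : fieldType) (A : lmodType K).
Implicit Types (f g : A -> A) (mu : A -> A -> A).

Lemma lin_mapD f : lin_map f -> forall x y, f (x + y) = f x + f y.
Proof. by move=> lin_f x y; have := lin_f 1 x y; rewrite !scale1r. Qed.

Lemma lin_map_comp f g : lin_map f -> lin_map g -> lin_map (f \o g).
Proof. by move=> lin_f lin_g c x y /=; rewrite lin_g lin_f. Qed.

Lemma bilinear_mulDr mu : bilinear_mul mu -> forall x y z, mu x (y + z) = mu x y + mu x z.
Proof. by move=> [_ lin_r] x y z; have := lin_r 1 x y z; rewrite !scale1r. Qed.

End LinearMaps.

Definition twisted_mul {K : fieldType} {A : lmodType K}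
    (mu : A -> A -> A) (lambda xi D : A -> A) (a b : A) : A :=
  mu (lambda a) (xi (D b)).

Section TwistedMul.
Variables (K : fieldType) (A : lmodType K) (mu : A -> A -> A) (lambda xi D : A -> A).
Local Notation mu' := (twisted_mul mu lambda xi D).

Lemma bilinear_twisted_mul :
  bilinear_mul mu -> lin_map lambda -> lin_map xi -> lin_map D -> bilinear_mul mu'.
Proof.
move=> [lin_l lin_r] lin_lambda lin_xi lin_D; split=> c x y z.
  by rewrite /twisted_mul lin_lambda lin_l.
by rewrite /twisted_mul lin_D lin_xi lin_r.
Qed.

End TwistedMul.

Section BiHomCommutative.
Variables (K : fieldType) (A : lmodType K) (mu : A -> A -> A) (alpha beta : A -> A).
Hypothesis bihom_comm : BiHom_commutative mu alpha beta.

Lemma bihom_bilinear : bilinear_mul mu.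
Proof. by case: bihom_comm => -[]. Qed.

Lemma bihom_mul_alpha : multiplicative mu alpha.
Proof. by case: bihom_comm => -[_ [_ [_ [_ []]]]]. Qed.

Lemma bihom_mul_beta : multiplicative mu beta.
Proof. by case: bihom_comm => -[_ [_ [_ [_ [_ []]]]]]. Qed.

Lemma bihom_mul_assoc x y z : mu (alpha x) (mu y z) = mu (mu x y) (beta z).
Proof. by case: bihom_comm => -[_ [_ [_ [_ [_ [_ assoc]]]]]] _; apply: assoc. Qed.

Lemma bihom_mul_comm a b : mu (beta a) (alpha b) = mu (beta b) (alpha a).
Proof. by case: bihom_comm => _; apply. Qed.

Lemma bihom_mul_left_comm p q r :
  mu (alpha (beta p)) (mu (alpha q) r) = mu (alpha (beta q)) (mu (alpha p) r).
Proof. by rewrite !bihom_mul_assoc bihom_mul_comm. Qed.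

Lemma bihom_mul_right_comm p u v :
  mu (mu p (beta u)) (beta (alpha v)) = mu (mu p (beta v)) (beta (alpha u)).
Proof. by rewrite -!bihom_mul_assoc bihom_mul_comm. Qed.

End BiHomCommutative.

Section DerivationTwist.
Variables (K : fieldType) (A : lmodType K) (mu : A -> A -> A).
Variables (alpha beta gamma lambda xi D : A -> A).
Hypothesis maps_comm : pairwise_commute [:: alpha; beta; gamma; lambda; xi; D].
Hypothesis bihom_comm : BiHom_commutative mu alpha beta.
Hypothesis lin_xi : lin_map xi.
Hypothesis mul_gamma : multiplicative mu gamma.
Hypothesis mul_lambda : multiplicative mu lambda.
Hypothesis mul_xi : multiplicative mu xi.
Hypothesis D_Leibniz : forall a b, D (mu a b) = mu (gamma a) (D b) + mu (D a) (gamma b).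

Local Notation mu' := (twisted_mul mu lambda xi D).
Local Notation alpha' := (lambda \o alpha).
Local Notation beta' := (xi \o beta \o gamma).

Let beta_alpha : commute_maps beta alpha := maps_comm 1 0.
Let gamma_alpha : commute_maps gamma alpha := maps_comm 2 0.
Let gamma_beta : commute_maps gamma beta := maps_comm 2 1.
Let lambda_alpha : commute_maps lambda alpha := maps_comm 3 0.
Let lambda_beta : commute_maps lambda beta := maps_comm 3 1.
Let lambda_gamma : commute_maps lambda gamma := maps_comm 3 2.
Let xi_alpha : commute_maps xi alpha := maps_comm 4 0.
Let xi_beta : commute_maps xi beta := maps_comm 4 1.
Let xi_gamma : commute_maps xi gamma := maps_comm 4 2.
Let xi_lambda : commute_maps xi lambda := maps_comm 4 3.
Let D_alpha : commute_maps D alpha := maps_comm 5 0.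
Let D_beta : commute_maps D beta := maps_comm 5 1.
Let D_gamma : commute_maps D gamma := maps_comm 5 2.
Let D_lambda : commute_maps D lambda := maps_comm 5 3.
Let D_xi : commute_maps D xi := maps_comm 5 4.

(* Each commutation moves the map that comes first in the list outwards, so
   [normalize] sorts every composite of the six maps and terminates. *)
Local Ltac normalize :=
  repeat progress rewrite ?beta_alpha ?gamma_alpha ?gamma_beta ?lambda_alpha
    ?lambda_beta ?lambda_gamma ?xi_alpha ?xi_beta ?xi_gamma ?xi_lambda
    ?D_alpha ?D_beta ?D_gamma ?D_lambda ?D_xi
    ?(bihom_mul_alpha bihom_comm) ?(bihom_mul_beta bihom_comm) ?mul_gamma ?mul_lambda ?mul_xi.

Lemma commute_maps_alpha'_beta' : commute_maps alpha' beta'.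
Proof. by move=> a /=; normalize. Qed.

Lemma multiplicative_twisted_mul_alpha' : multiplicative mu' alpha'.
Proof. by move=> a b; rewrite /twisted_mul /=; normalize. Qed.

Lemma multiplicative_twisted_mul_beta' : multiplicative mu' beta'.
Proof. by move=> a b; rewrite /twisted_mul /=; normalize. Qed.

Lemma twisted_mul_Novikov_left x y z :
  mu' (mu' (beta' x) (alpha' y)) (beta' z) - mu' (alpha' (beta' x)) (mu' (alpha' y) z)
  = mu' (mu' (beta' y) (alpha' x)) (beta' z) - mu' (alpha' (beta' y)) (mu' (alpha' x) z).
Proof.
have mulDr := bilinear_mulDr (bihom_bilinear bihom_comm).
have subDKr (a b : A) : a - (b + a) = - b by rewrite opprD addrCA subrr addr0.
have assoc a b := bihom_mul_assoc bihom_comm (lambda (lambda (xi (beta (gamma a)))))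
  (lambda (xi (D (lambda (alpha b))))) (xi (D (xi (gamma z)))).
have left_comm := bihom_mul_left_comm bihom_comm (lambda (lambda (xi (gamma x))))
  (xi (gamma (lambda (lambda y)))) (xi (xi (D (D z)))).
move: (assoc x y) (assoc y x) left_comm.
rewrite /twisted_mul /= !D_Leibniz !(lin_mapD lin_xi) !mulDr; normalize => <- <- ->.
by rewrite !subDKr.
Qed.

Lemma twisted_mul_Novikov_right x y z :
  mu' (mu' x (beta' y)) (alpha' (beta' z)) = mu' (mu' x (beta' z)) (alpha' (beta' y)).
Proof.
have := bihom_mul_right_comm bihom_comm (lambda (lambda x))
  (lambda (xi (D (xi (gamma y))))) (xi (D (lambda (xi (gamma z))))).
by rewrite /twisted_mul /=; normalize.
Qed.

End DerivationTwist.

Theorem proposition2p7 (K : fieldType) (A : lmodType K)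
  (mu : A -> A -> A) (alpha beta gamma lambda xi D : A -> A) :
  BiHom_commutative mu alpha beta ->
  lin_map gamma -> lin_map lambda -> lin_map xi -> lin_map D ->
  multiplicative mu gamma -> multiplicative mu lambda -> multiplicative mu xi ->
  pairwise_commute [:: alpha; beta; gamma; lambda; xi; D] ->
  (forall a b, D (mu a b) = mu (gamma a) (D b) + mu (D a) (gamma b)) ->
  BiHom_Novikov (fun a b => mu (lambda a) (xi (D b)))
                (fun x => lambda (alpha x)) (fun x => xi (beta (gamma x))).
Proof.
move=> bihom_comm lin_gamma lin_lambda lin_xi lin_D mul_gamma mul_lambda mul_xi
  maps_comm D_Leibniz.
change (BiHom_Novikov (twisted_mul mu lambda xi D) (lambda \o alpha) (xi \o beta \o gamma)).
have [[bilin [lin_alpha [lin_beta _]]] _] := bihom_comm.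
split; first exact: bilinear_twisted_mul.
split; first exact: lin_map_comp.
split; first exact: lin_map_comp (lin_map_comp lin_xi lin_beta) lin_gamma.
split; first exact: (commute_maps_alpha'_beta' maps_comm).
split; first exact: (multiplicative_twisted_mul_alpha' maps_comm).
split; first exact: (multiplicative_twisted_mul_beta' maps_comm).
split; first exact: (twisted_mul_Novikov_left maps_comm).
exact: (twisted_mul_Novikov_right maps_comm).
Qed.
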